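(* Let $\kappa=2$. For any $K\ge0$, any distribution generating $(x_t,\mathscr C_t)_{t=1}^V$, and any class $L\subseteq[2]^{\mathcal X}$ of benchmark predictors, there exists a strategy for choosing the labels $y_1,\dots,y_V$ such that every prediction algorithm satisfies $$\mathbb E[\mathbf{Reg}]\ge\frac12\,\mathbb E_{(\mathscr C,x)_{1:V}}\mathrm{Rad}_V(L_K(\mathcal I_{1:V})).$$
   Context: Notation: $[n]=\{1,\dots,n\}$. Setting: $V\ge1$, a set $\mathcal X$, a class $L$ of functions $\mathcal X\to[\kappa]$. A constraint $c=(S_c,R_c)$, $S_c\subseteq[V]$, $R_c:[\kappa]^{S_c}\to\mathbb R_{\ge0}$; $c(g)=R_c(g|_{S_c})$ for $g\in[\kappa]^V$. On rounds $t=1,\dots,V$ the forecaster observes $x_t\in\mathcal X$ and a finite constraint set $\mathscr C_t$ ($\mathcal I_t=(\mathscr C_t,x_t)$, drawn from a known distribution), predicts $\widehat y_t\in[\kappa]$ (possibly randomized), then observes $y_t\in[\kappa]$. $L_K(\mathcal I_{1:V})=\{f\in L:\sum_{c\in\cup_t\mathscr C_t}c((f(x_1),\dots,f(x_V)))\le K\}$; $\mathbf{Reg}=\sum_t\mathbf 1\{\widehat y_t\ne y_t\}-\inf_{f\in L_K(\mathcal I_{1:V})}\sum_t\mathbf 1\{f(x_t)\ne y_t\}$, expectation over all randomness. $\mathrm{Rad}_V(L_K(\mathcal I_{1:V}))=\mathbb E_{\boldsymbol\epsilon}\sup_{f\in L_K(\mathcal I_{1:V})}\sum_{j=1}^V\sum_{k=1}^\kappa\boldsymbol\epsilon_{j,k}\mathbf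 1\{f(x_j)=k\}$ with $\boldsymbol\epsilon_{j,k}$ i.i.d. uniform on $\{-1,1\}$. *)

From HB Require Import structures.
From mathcomp Require Import all_boot all_order all_algebra.
From mathcomp Require Import all_classical all_reals all_analysis.
From mathcomp Require Import measurable_realfun.
Set Implicit Arguments. Unset Strict Implicit. Unset Printing Implicit Defensive.
Import Order.TTheory GRing.Theory Num.Theory.
Local Open Scope classical_set_scope.
Local Open Scope ring_scope.

(* kappa = 2 : the label set [2] = {1,2} is represented by 'I_2 = {0,1}. *)

Section Defs.
Variables (R : realType) (V : nat).

Definition scope_t (S : {set 'I_V}) := {i : 'I_V | i \in S}.

Definition constraint := {S : {set 'I_V} & {ffun {ffun scope_t S -> 'I_2} -> R}}.

Definition cscope (c : constraint) : {set 'I_V} := tag c.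

Definition ceval (c : constraint) (g : {ffun 'I_V -> 'I_2}) : R :=
  tagged c [ffun i : scope_t (tag c) => g (val i)].

Definition constraint_nonneg (c : constraint) : Prop :=
  forall h, 0 <= tagged c h.

Definition prefix (T : Type) (g : 'I_V -> T) (n : nat) : seq T :=
  map g (take n (enum 'I_V)).

Variable X : Type.

Definition LK (L : set (X -> 'I_2)) (K : R)
    (x : 'I_V -> X) (C : 'I_V -> seq constraint) : set (X -> 'I_2) :=
  [set f | L f /\
     \sum_(c <- undup (flatten [seq C t | t <- enum 'I_V]))
        ceval c [ffun t => f (x t)] <= K].

Definition sgn (b : bool) : R := if b then 1 else -1.

(* Rad_V(F) = E_eps sup_{f in F} sum_j sum_k eps_{j,k} 1{f(x_j)=k},
   eps uniform on {-1,1}^{V x 2} (encoded as booleans). *)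
Definition Rad (F : set (X -> 'I_2)) (x : 'I_V -> X) : \bar R :=
  (\sum_(e : {ffun 'I_V * 'I_2 -> bool})
     ((2 ^- (2 * V))%:E *
      ereal_sup [set (\sum_(j < V) \sum_(k < 2)
                        sgn (e (j, k)) * (f (x j) == k)%:R)%:E
                | f in F]))%E.

(* History seen at round t: instances I_1..I_t, labels y_1..y_{t-1},
   predictions yhat_1..yhat_{t-1}. A (behavioural, randomized) strategy maps a
   round and a history to a distribution on [2]. *)
Definition strategy :=
  'I_V -> seq (X * seq constraint) -> seq 'I_2 -> seq 'I_2 -> 'I_2 -> R.

Definition valid_strategy (s : strategy) : Prop :=
  forall t h ys yhs, (forall k, 0 <= s t h ys yhs k) /\
                     \sum_(k < 2) s t h ys yhs k = 1.

Definition play_weight (A B : strategy)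
    (x : 'I_V -> X) (C : 'I_V -> seq constraint)
    (yh y : {ffun 'I_V -> 'I_2}) : R :=
  \prod_(t < V)
    (let h := prefix (fun i => (x i, C i)) t.+1 in
     let ys := prefix y t in
     let yhs := prefix yh t in
     A t h ys yhs (yh t) * B t h ys yhs (y t)).

Definition regret (L : set (X -> 'I_2)) (K : R)
    (x : 'I_V -> X) (C : 'I_V -> seq constraint)
    (yh y : {ffun 'I_V -> 'I_2}) : \bar R :=
  ((\sum_(t < V) (yh t != y t)%:R)%:E -
   ereal_inf [set (\sum_(t < V) (f (x t) != y t)%:R)%:E | f in LK L K x C])%E.

Definition cond_exp_regret (L : set (X -> 'I_2)) (K : R) (A B : strategy)
    (x : 'I_V -> X) (C : 'I_V -> seq constraint) : \bar R :=
  (\sum_(yh : {ffun 'I_V -> 'I_2}) \sum_(y : {ffun 'I_V -> 'I_2})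
     ((play_weight A B x C yh y)%:E * regret L K x C yh y))%E.

End Defs.

Arguments Rad {R V X}.
Arguments LK {R V X}.
Arguments regret {R V X}.
Arguments cond_exp_regret {R V X}.
Arguments play_weight {R V X}.

From Pilot Require Import Defs.
From HB Require Import structures.
From mathcomp Require Import all_boot all_order all_algebra.
From mathcomp Require Import all_classical all_reals all_analysis.
From mathcomp Require Import measurable_realfun.
From mathcomp Require Import ring lra.
Import Order.TTheory GRing.Theory Num.Theory.
Local Open Scope classical_set_scope.
Local Open Scope ring_scope.
Set Implicit Arguments. Unset Strict Implicit. Unset Printing Implicit Defensive.

(* Let the labels be independent fair coins.  Whatever the forecaster does,
   it errs on V/2 rounds on average, so for a fixed instance the expected regret
   is V/2 + E_y max_g (- #{t | g_t <> y_t}), the maximum ranging over the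
   finitely many label vectors g realised by L_K.  In Rad, sum over the signs
   (eps_{j,1}, eps_{j,2}) of one round at a time: the two equal-sign choices
   shift the maximum by +1 and -1, and they are dominated by the two
   opposite-sign choices since max (T + d) + max (T - d) >= 2 max T.  Once every
   round has opposite signs, eps is a uniformly random label y scoring
   V - 2 #mismatches, whence Rad <= V + 2 E_y max_g (- #mismatches), that is,
   Rad / 2 <= E[Reg] for every instance; integrate over the instances. *)

Section TupleSums.
Variable M : nmodType.

Lemma sum_tuple0 (T : finType) (F : 0.-tuple T -> M) :
  \sum_(t : 0.-tuple T) F t = F [tuple].
Proof. by rewrite (big_pred1 [tuple]) // => t /=; apply/esym/eqP; exact: tuple0. Qed.

Lemma sum_tuple_cons (T : finType) n (F : n.+1.-tuple T -> M) :
  \sum_(t : n.+1.-tuple T) F t =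
  \sum_(a : T) \sum_(t : n.-tuple T) F [tuple of a :: t].
Proof.
rewrite pair_big (reindex (fun p : T * n.-tuple T => [tuple of p.1 :: p.2])) //=.
apply: onW_bij; exists (fun t : n.+1.-tuple T => (thead t, behead_tuple t)).
  by move=> [a t] /=; rewrite theadE; congr pair; apply: val_inj.
by move=> t /=; rewrite [RHS]tuple_eta.
Qed.

End TupleSums.

Section UniformLabels.
Variable R : numFieldType.

Definition forecast_kernel := nat -> seq 'I_2 -> seq 'I_2 -> 'I_2 -> R.

Definition kernel_normalized (al : forecast_kernel) :=
  forall t ys yhs, \sum_(a < 2) al t ys yhs a = 1.

Definition uniform_play_prob n (al : forecast_kernel) (yh y : n.-tuple 'I_2) : R :=
  \prod_(i < n) (al i (take i y) (take i yh) (tnth yh i) * 2^-1).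

Definition kernel_after (al : forecast_kernel) (a b : 'I_2) : forecast_kernel :=
  fun t ys yhs => al t.+1 (b :: ys) (a :: yhs).

Definition mismatches n (u v : n.-tuple 'I_2) : R :=
  \sum_(i < n) (tnth u i != tnth v i)%:R.

Lemma kernel_after_normalized al a b :
  kernel_normalized al -> kernel_normalized (kernel_after al a b).
Proof. by move=> hal t ys yhs; exact: hal. Qed.

Lemma uniform_play_prob_cons n al a b (yh y : n.-tuple 'I_2) :
  uniform_play_prob al [tuple of a :: yh] [tuple of b :: y] =
  al 0%N [::] [::] a * 2^-1 * uniform_play_prob (kernel_after al a b) yh y.
Proof.
rewrite /uniform_play_prob big_ord_recl /= tnth0; congr (_ * _).
by apply: eq_bigr => i _; rewrite tnthS.
Qed.

Lemma mismatches_cons n a b (u v : n.-tuple 'I_2) :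
  mismatches [tuple of a :: u] [tuple of b :: v] = (a != b)%:R + mismatches u v.
Proof.
rewrite /mismatches big_ord_recl !tnth0; congr (_ + _).
by apply: eq_bigr => i _; rewrite !tnthS.
Qed.

Lemma sum_uniform_play_prob_cons n al
    (F : n.+1.-tuple 'I_2 -> n.+1.-tuple 'I_2 -> R) :
  \sum_yh \sum_y uniform_play_prob al yh y * F yh y =
  \sum_(a < 2) \sum_(b < 2) al 0%N [::] [::] a * 2^-1 *
    \sum_yh \sum_y uniform_play_prob (kernel_after al a b) yh y *
      F [tuple of a :: yh] [tuple of b :: y].
Proof.
rewrite sum_tuple_cons; apply: eq_bigr => a _.
under eq_bigr => yh _ do rewrite sum_tuple_cons.
rewrite exchange_big; apply: eq_bigr => b _.
rewrite big_distrr; apply: eq_bigr => yh _.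
rewrite big_distrr; apply: eq_bigr => y _.
by rewrite uniform_play_prob_cons -mulrA.
Qed.

Lemma sum_first_round al (G : 'I_2 -> 'I_2 -> R) c :
  kernel_normalized al -> (forall a, \sum_(b < 2) G a b = c) ->
  \sum_(a < 2) \sum_(b < 2) al 0%N [::] [::] a * 2^-1 * G a b = 2^-1 * c.
Proof.
move=> hal hG; under eq_bigr => a _ do rewrite -mulr_sumr hG -mulrA.
by rewrite -mulr_suml hal mul1r.
Qed.

Lemma sum_uniform_play_prob_labels n al (phi : n.-tuple 'I_2 -> R) :
  kernel_normalized al ->
  \sum_yh \sum_y uniform_play_prob al yh y * phi y =
  2^-1 ^+ n * \sum_y phi y.
Proof.
elim: n al phi => [|n IH] al phi hal.
  by rewrite !sum_tuple0 /uniform_play_prob big_ord0 expr0 !mul1r.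
rewrite sum_uniform_play_prob_cons.
have IHab a b :
    \sum_yh \sum_(y : n.-tuple 'I_2)
      uniform_play_prob (kernel_after al a b) yh y * phi [tuple of b :: y] =
    2^-1 ^+ n * \sum_(y : n.-tuple 'I_2) phi [tuple of b :: y].
  by apply: IH; exact: kernel_after_normalized.
under eq_bigr => a _ do under eq_bigr => b _ do rewrite IHab.
rewrite (@sum_first_round al _ (2^-1 ^+ n * \sum_y phi y)) ?exprS ?mulrA //.
by move=> a; rewrite -mulr_sumr sum_tuple_cons.
Qed.

Lemma sum_uniform_play_prob n al : kernel_normalized al ->
  \sum_(yh : n.-tuple 'I_2) \sum_y uniform_play_prob al yh y = 1.
Proof.
move=> hal; have := @sum_uniform_play_prob_labels n al (fun _ => 1) hal.
under eq_bigr => yh _ do under eq_bigr => y _ do rewrite mulr1.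
move=> ->; rewrite sumr_const card_tuple card_ord natrX -exprMn.
by rewrite mulVf ?expr1n ?pnatr_eq0.
Qed.

Lemma expected_mismatches n al : kernel_normalized al ->
  \sum_(yh : n.-tuple 'I_2) \sum_y uniform_play_prob al yh y * mismatches yh y =
  n%:R / 2.
Proof.
elim: n al => [|n IH] al hal.
  rewrite mul0r; apply: big1 => yh _; apply: big1 => y _.
  by rewrite /mismatches big_ord0 mulr0.
rewrite sum_uniform_play_prob_cons.
under eq_bigr => a _ do under eq_bigr => b _ do
  under eq_bigr => yh _ do under eq_bigr => y _
    do rewrite mismatches_cons mulrDr.
have inner a b :
    \sum_(yh : n.-tuple 'I_2) \sum_(y : n.-tuple 'I_2)
      (uniform_play_prob (kernel_after al a b) yh y * (a != b)%:R +
       uniform_play_prob (kernel_after al a b) yh y * mismatches yh y) =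
    (a != b)%:R + n%:R / 2.
  have hab := @kernel_after_normalized al a b hal.
  under eq_bigr => yh _ do rewrite big_split.
  rewrite big_split /= IH //; congr (_ + _).
  under eq_bigr => yh _ do rewrite -mulr_suml.
  by rewrite -mulr_suml sum_uniform_play_prob ?mul1r.
under eq_bigr => a _ do under eq_bigr => b _ do rewrite inner.
rewrite (@sum_first_round al _ n.+1%:R) 1?mulrC // => a.
have two_neq0 : (2 : R) != 0 by rewrite pnatr_eq0.
rewrite big_split /= sumr_const card_ord !big_ord_recl big_ord0.
by case: a => [[|[|?]]] //= _; rewrite -natr1; field.
Qed.

End UniformLabels.

Section FiniteMax.
Variables (R : realDomainType) (T : finType) (G : {set T}) (g0 : T).
Hypothesis G_g0 : g0 \in G.

Definition maxG (H : T -> R) : R := \big[Order.max/H g0]_(g in G) H g.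

Lemma le_maxG H g : g \in G -> H g <= maxG H.
Proof. by move=> Gg; apply: le_bigmax_cond. Qed.

Lemma maxG_le H b : (forall g, g \in G -> H g <= b) -> maxG H <= b.
Proof. by move=> Hb; apply: bigmax_le => //; apply: Hb. Qed.

End FiniteMax.

Section SignedScores.
Variables (R : realFieldType) (V : nat) (G : {set {ffun 'I_V -> 'I_2}})
  (g0 : {ffun 'I_V -> 'I_2}).
Hypothesis G_g0 : g0 \in G.

Definition pair_at (c : R * R) (k : 'I_2) : R := if k == ord0 then c.1 else c.2.

(* Coordinates past the end of [s] score [0]. *)
Definition score (s : seq (R * R)) (g : {ffun 'I_V -> 'I_2}) : R :=
  \sum_(j < V) pair_at (nth (0, 0) s j) (g j).

Definition max_score s := maxG G g0 (score s).

Lemma score_cat_cons p c q g : score (p ++ c :: q) g =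
  score (p ++ (0, 0) :: q) g + \sum_(j < V) ((j : nat) == size p)%:R * pair_at c (g j).
Proof.
rewrite /score -big_split /=; apply: eq_bigr => j _.
rewrite !nth_cat; case: ltngtP => hj.
- by rewrite mul0r addr0.
- case E: (j - size p)%N => [|k]; last by rewrite mul0r addr0.
  by move: hj; rewrite -subn_gt0 E.
- by rewrite hj subnn /pair_at /= if_same add0r mul1r.
Qed.

Lemma max_score_four_point p q :
  max_score (p ++ (1, 1) :: q) + max_score (p ++ (-1, -1) :: q) <=
  max_score (p ++ (1, -1) :: q) + max_score (p ++ (-1, 1) :: q).
Proof.
set T0 := score (p ++ (0, 0) :: q).
set at_p := \sum_(j < V) (((j : nat) == size p)%:R : R).
set d := fun g : {ffun 'I_V -> 'I_2} =>
  \sum_(j < V) ((j : nat) == size p)%:R * pair_at (1, -1) (g j).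
have score_pp g : score (p ++ (1, 1) :: q) g = T0 g + at_p.
  rewrite score_cat_cons; congr (_ + _); apply: eq_bigr => j _.
  by rewrite /pair_at if_same mulr1.
have score_nn g : score (p ++ (-1, -1) :: q) g = T0 g - at_p.
  rewrite score_cat_cons -sumrN; congr (_ + _); apply: eq_bigr => j _.
  by rewrite /pair_at if_same mulrN1.
have score_pn g : score (p ++ (1, -1) :: q) g = T0 g + d g.
  by rewrite score_cat_cons.
have score_np g : score (p ++ (-1, 1) :: q) g = T0 g - d g.
  rewrite score_cat_cons -sumrN; congr (_ + _); apply: eq_bigr => j _.
  by rewrite /pair_at; case: ifP; rewrite ?mulrN1 ?mulr1 ?opprK.
have max_pp : max_score (p ++ (1, 1) :: q) <= maxG G g0 T0 + at_p.
  by apply: maxG_le => // g Gg; rewrite score_pp lerD2r le_maxG.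
have max_nn : max_score (p ++ (-1, -1) :: q) <= maxG G g0 T0 - at_p.
  by apply: maxG_le => // g Gg; rewrite score_nn lerD2r le_maxG.
have max_T0 : 2 * maxG G g0 T0 <=
    max_score (p ++ (1, -1) :: q) + max_score (p ++ (-1, 1) :: q).
  rewrite mulrC -ler_pdivlMr ?ltr0n //; apply: maxG_le => // g Gg.
  have := le_maxG g0 (score (p ++ (1, -1) :: q)) Gg.
  have := le_maxG g0 (score (p ++ (-1, 1) :: q)) Gg.
  rewrite score_pn score_np /max_score; lra.
lra.
Qed.

Definition sign_pair (c : bool * bool) : R * R :=
  (if c.1 then 1 else -1, if c.2 then 1 else -1).

Definition opposite_pair (b : 'I_2) : R * R := if b == ord0 then (1, -1) else (-1, 1).

Lemma sum_max_score_signs n p :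
  \sum_(t : n.-tuple (bool * bool)) max_score (p ++ map sign_pair t) <=
  2 ^+ n * \sum_(v : n.-tuple 'I_2) max_score (p ++ map opposite_pair v).
Proof.
elim: n p => [|n IH] p; first by rewrite !sum_tuple0 expr0 mul1r.
rewrite sum_tuple_cons.
under eq_bigr => c _ do under eq_bigr => t _ do rewrite /= -cat_rcons.
apply: le_trans (ler_sum _ (fun c _ => IH (rcons p (sign_pair c)))) _.
rewrite -mulr_sumr exchange_big /= exprS -mulrA mulrCA.
apply: ler_wpM2l; first exact: exprn_ge0.
rewrite sum_tuple_cons [X in _ <= 2 * X]exchange_big mulr_sumr.
apply: ler_sum => v _.
under eq_bigr => c _ do rewrite cat_rcons.
rewrite -(pair_big xpredT xpredT (fun a b => max_score (p ++ sign_pair (a, b) :: _))) /=.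
rewrite !big_bool !big_ord_recl big_ord0 /=.
have := max_score_four_point p (map opposite_pair v).
rewrite /sign_pair /opposite_pair /=; lra.
Qed.

End SignedScores.

Section Codes.
Variables (R : realType) (V : nat) (X : Type) (x : 'I_V -> X) (F : set (X -> 'I_2)).

Definition code (f : X -> 'I_2) : {ffun 'I_V -> 'I_2} := [ffun j => f (x j)].

Definition codes : {set {ffun 'I_V -> 'I_2}} :=
  [set g | `[< exists2 f, F f & code f = g >]].

Lemma code_in_codes f : F f -> code f \in codes.
Proof. by move=> Ff; rewrite inE; apply/asboolP; exists f. Qed.

Lemma codesP g : g \in codes -> exists2 f, F f & code f = g.
Proof. by rewrite inE => /asboolP. Qed.

Variables (f0 : X -> 'I_2) (Ff0 : F f0).

Lemma ereal_sup_codes (H : {ffun 'I_V -> 'I_2} -> R) (h : (X -> 'I_2) -> R) :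
  (forall f, h f = H (code f)) ->
  ereal_sup [set (h f)%:E | f in F] = (maxG codes (code f0) H)%:E.
Proof.
move=> hH; apply/le_anti/andP; split.
  apply: ge_ereal_sup => _ [f Ff <-]; rewrite lee_fin hH.
  exact/le_maxG/code_in_codes.
have ub g : g \in codes -> ((H g)%:E <= ereal_sup [set (h f)%:E | f in F])%E.
  by move=> /codesP [f Ff <-]; rewrite -hH; apply: ereal_sup_ubound; exists f.
move: (ub _ (code_in_codes Ff0)).
case E: (ereal_sup _) => [r| |] // _; last by rewrite leey.
rewrite lee_fin; apply: maxG_le => [|g Gg]; first exact: code_in_codes.
by have := ub _ Gg; rewrite E lee_fin.
Qed.

Lemma ereal_inf_codes (H : {ffun 'I_V -> 'I_2} -> R) (h : (X -> 'I_2) -> R) :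
  (forall f, h f = H (code f)) ->
  ereal_inf [set (h f)%:E | f in F] = (- maxG codes (code f0) (fun g => - H g))%:E.
Proof.
move=> hH; rewrite /ereal_inf EFinN; congr (- _)%E.
rewrite -(@ereal_sup_codes (fun g => - H g) (fun f => - h f));
  last by move=> f; rewrite hH.
congr ereal_sup; apply/seteqP; split => z /=.
  by move=> [_ [f Ff <-] <-]; exists f.
by move=> [f Ff <-]; exists (h f)%:E => //; exists f.
Qed.

End Codes.

Section Reindexing.
Variables (M : nmodType) (V : nat).

Lemma sum_ffun_tuple (H : {ffun 'I_V -> 'I_2} -> M) :
  \sum_y H y = \sum_(v : V.-tuple 'I_2) H (finfun_of_tuple v).
Proof.
rewrite (reindex (@finfun_of_tuple 'I_2 V)) //; apply: onW_bij.
by exists tuple_of_finfun; [exact: finfun_of_tupleK | exact: tuple_of_finfunK].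
Qed.

Definition sign_matrix (t : V.-tuple (bool * bool)) : {ffun 'I_V * 'I_2 -> bool} :=
  [ffun jk => if jk.2 == ord0 then (tnth t jk.1).1 else (tnth t jk.1).2].

Lemma sign_matrix_bij : bijective sign_matrix.
Proof.
exists (fun e : {ffun 'I_V * 'I_2 -> bool} =>
  [tuple (e (j, ord0), e (j, ord_max)) | j < V]).
  move=> t; apply: eq_from_tnth => j; rewrite tnth_mktuple !ffunE /=.
  by case: (tnth t j).
move=> e; apply/ffunP => -[j k]; rewrite !ffunE tnth_mktuple /=.
by case: k => [[|[|m]]] Hk //=; congr (e (j, _)); apply: val_inj.
Qed.

Lemma sum_sign_matrix (H : {ffun 'I_V * 'I_2 -> bool} -> M) :
  \sum_e H e = \sum_(t : V.-tuple (bool * bool)) H (sign_matrix t).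
Proof. by rewrite (reindex sign_matrix) //; apply/onW_bij/sign_matrix_bij. Qed.

End Reindexing.

Section RadScores.
Variables (R : realType) (V : nat).

Definition rad_score (e : {ffun 'I_V * 'I_2 -> bool}) (g : {ffun 'I_V -> 'I_2}) : R :=
  \sum_(j < V) \sum_(k < 2) sgn R (e (j, k)) * (g j == k)%:R.

Lemma rad_score_sign_matrix t g :
  rad_score (sign_matrix t) g = score (map (@sign_pair R) t) g.
Proof.
apply: eq_bigr => j _.
rewrite (nth_map (false, false)) ?size_tuple // -tnth_nth.
rewrite !big_ord_recl big_ord0 !ffunE /=.
by case: (g j) => [[|[|m]]] Hm //=; case: (tnth t j) => [[] []];
  rewrite /sgn /pair_at /sign_pair /=; lra.
Qed.

Definition mismatch_count (g y : {ffun 'I_V -> 'I_2}) : R := \sum_(t < V) (g t != y t)%:R.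

Lemma score_opposite (v : V.-tuple 'I_2) g :
  score (map (@opposite_pair R) v) g = V%:R - 2 * mismatch_count g (finfun_of_tuple v).
Proof.
rewrite -[V in V%:R]card_ord -sumr_const mulr_sumr -sumrB; apply: eq_bigr => j _.
rewrite (nth_map ord0) ?size_tuple // -tnth_nth ffunE /opposite_pair /pair_at.
by case: (g j) => [[|[|m]]] Hm //=; case: (tnth v j) => [[|[|m']]] Hm' //=; lra.
Qed.

End RadScores.

Arguments rad_score {R V}.
Arguments mismatch_count {R V}.

Section UniformLabeler.
Variables (R : realType) (V : nat) (X : Type).

Definition uniform_labeler : strategy R V X := fun _ _ _ _ _ => 2^-1.

Lemma sum_half : \sum_(a < 2) (2^-1 : R) = 1.
Proof. rewrite sumr_const card_ord mulr2n; lra. Qed.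

Lemma uniform_labeler_valid : valid_strategy uniform_labeler.
Proof.
move=> t h ys yhs; split => [k|]; last exact: sum_half.
by rewrite /uniform_labeler invr_ge0 ler0n.
Qed.

(* Rounds past [V] never occur; they get the uniform kernel only so that the
   kernel stays normalized. *)
Definition strategy_kernel (A : strategy R V X) (x : 'I_V -> X)
    (C : 'I_V -> seq (constraint R V)) : forecast_kernel R :=
  fun t ys yhs a => if @insub _ _ 'I_V t is Some i
    then A i (Defs.prefix (fun i => (x i, C i)) t.+1) ys yhs a else 2^-1.

Lemma strategy_kernel_normalized A x C :
  valid_strategy A -> kernel_normalized (strategy_kernel A x C).
Proof.
move=> hA t ys yhs; rewrite /strategy_kernel.
by case: insub => [i|]; [exact: (hA _ _ _ _).2 | exact: sum_half].
Qed.

Lemma map_finfun_of_tuple (v : V.-tuple 'I_2) n :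
  map (finfun_of_tuple v) (take n (enum 'I_V)) = take n v.
Proof.
rewrite map_take; congr take; rewrite -[RHS](map_tnth_enum v).
by apply: eq_map => j; rewrite ffunE.
Qed.

Lemma play_weight_uniform A x C (yh y : V.-tuple 'I_2) :
  play_weight A uniform_labeler x C (finfun_of_tuple yh) (finfun_of_tuple y) =
  uniform_play_prob (strategy_kernel A x C) yh y.
Proof.
apply: eq_bigr => i _ /=.
rewrite /strategy_kernel (_ : @insub _ _ 'I_V (i : nat) = Some i); last exact: valK.
by rewrite /Defs.prefix !map_finfun_of_tuple ffunE.
Qed.

End UniformLabeler.

Arguments uniform_labeler {R V X}.

Lemma Rad_set0 (R : realType) (V : nat) (X : Type) (x : 'I_V -> X) :
  Rad (R := R) set0 x = -oo%E.
Proof.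
rewrite /Rad (bigD1 ([ffun=> true] : {ffun 'I_V * 'I_2 -> bool})) //=.
by rewrite image_set0 ereal_sup0 gt0_muleNy ?addNye // lte_fin invr_gt0 exprn_gt0.
Qed.

Section Pointwise.
Variables (R : realType) (V : nat) (X : Type) (L : set (X -> 'I_2)) (K : R)
  (x : 'I_V -> X) (C : 'I_V -> seq (constraint R V)).

Let F := LK L K x C.

Section NonemptyClass.
Variables (f0 : X -> 'I_2) (Ff0 : F f0).

Let G := codes x F.
Let g0 := code x f0.
Let G_g0 : g0 \in G := code_in_codes x Ff0.

Definition neg_best_loss (y : {ffun 'I_V -> 'I_2}) : R :=
  maxG G g0 (fun g => - mismatch_count g y).

Lemma Rad_maxG :
  Rad (R := R) F x = (2 ^- (2 * V) * \sum_e maxG G g0 (rad_score e))%:E.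
Proof.
rewrite /Rad mulr_sumr -sumEFin; apply: eq_bigr => e _.
rewrite EFinM; congr (_ * _)%E.
apply: (@ereal_sup_codes R V X x F f0 Ff0 (rad_score e)) => f.
by apply: eq_bigr => j _; apply: eq_bigr => k _; rewrite ffunE.
Qed.

Lemma regret_codes yh y :
  regret L K x C yh y = (\sum_(t < V) (yh t != y t)%:R + neg_best_loss y)%:E.
Proof.
rewrite /regret (@ereal_inf_codes R V X x F f0 Ff0 (fun g => mismatch_count g y)).
  by rewrite -EFinB opprK.
by move=> f; apply: eq_bigr => t _; rewrite ffunE.
Qed.

Lemma sum_maxG_rad_score_le :
  \sum_e maxG G g0 (rad_score e) <=
  2 ^+ V * \sum_(v : V.-tuple 'I_2) (V%:R + 2 * neg_best_loss (finfun_of_tuple v)).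
Proof.
rewrite sum_sign_matrix.
have max_sign t : maxG G g0 (rad_score (sign_matrix t)) =
    max_score G g0 ([::] ++ map (@sign_pair R) t).
  by congr maxG; apply/funext => g; exact: rad_score_sign_matrix.
under eq_bigr => t _ do rewrite max_sign.
apply: le_trans (sum_max_score_signs G_g0 V [::]) _.
apply: ler_wpM2l; first exact: exprn_ge0.
apply: ler_sum => v _; apply: maxG_le => // g Gg.
rewrite score_opposite.
have := le_maxG g0 (fun g => - mismatch_count g (finfun_of_tuple v) : R) Gg.
rewrite /neg_best_loss; lra.
Qed.

Lemma cond_exp_regret_uniform A : valid_strategy A ->
  cond_exp_regret L K A uniform_labeler x C =
  (V%:R / 2 + 2^-1 ^+ V * \sum_(v : V.-tuple 'I_2) neg_best_loss (finfun_of_tuple v))%:E.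
Proof.
move=> hA; have hal := strategy_kernel_normalized x C hA.
transitivity ((\sum_yh \sum_y play_weight A uniform_labeler x C yh y *
    (\sum_(t < V) (yh t != y t)%:R + neg_best_loss y))%:E).
  rewrite -sumEFin; apply: eq_bigr => yh _; rewrite -sumEFin; apply: eq_bigr => y _.
  by rewrite EFinM regret_codes.
congr EFin; rewrite sum_ffun_tuple.
under eq_bigr => yh _ do rewrite sum_ffun_tuple.
under eq_bigr => yh _ do under eq_bigr => y _ do rewrite play_weight_uniform mulrDr.
under eq_bigr => yh _ do rewrite big_split.
rewrite big_split /=; congr (_ + _); last exact: sum_uniform_play_prob_labels.
rewrite -(expected_mismatches V hal); apply: eq_bigr => yh _; apply: eq_bigr => y _.
by congr (_ * _); apply: eq_bigr => t _; rewrite !ffunE.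
Qed.

End NonemptyClass.

Lemma half_Rad_le_cond_exp_regret A : valid_strategy A ->
  ((1/2)%:E * Rad (R := R) F x <= cond_exp_regret L K A uniform_labeler x C)%E.
Proof.
move=> hA; have [[f0 Ff0]|F0] := pselect (exists f, F f); last first.
  have -> : F = set0 by apply/seteqP; split => // f Ff; apply: F0; exists f.
  by rewrite Rad_set0 gt0_muleNy ?leNye // lte_fin; lra.
rewrite (Rad_maxG Ff0) (cond_exp_regret_uniform Ff0 hA) -EFinM lee_fin.
apply: (@le_trans _ _ (1 / 2 * (2 ^- (2 * V) * (2 ^+ V *
    \sum_(v : V.-tuple 'I_2) (V%:R + 2 * neg_best_loss f0 (finfun_of_tuple v)))))).
  apply: ler_wpM2l; first lra.
  apply: ler_wpM2l; [by rewrite invr_ge0 exprn_ge0 | exact: sum_maxG_rad_score_le].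
rewrite big_split /= sumr_const card_tuple card_ord -mulr_sumr.
rewrite -[V%:R *+ _]mulr_natr natrX mulnC exprM exprVn.
have two_pow_neq0 : (2 ^+ V : R) != 0 by rewrite expf_neq0 // pnatr_eq0.
by rewrite le_eqVlt; apply/orP; left; apply/eqP; field.
Qed.

End Pointwise.

Lemma le_muleBr (R : realType) (k : R) (a b : \bar R) : 0 < k -> (0 <= b)%E ->
  (k%:E * (a - b) <= k%:E * a - k%:E * b)%E.
Proof.
move=> k0; case: b => [r| |] // b0; last by rewrite addeNy gt0_muleNy ?leNye.
case: a => [s| |].
- by rewrite -!EFinM -EFinB lee_fin mulrBr.
- by rewrite /= addye // gt0_muley ?lte_fin // addye.
- by rewrite /= gt0_muleNy ?lte_fin // leNye.
Qed.

Lemma scale_le_integral d (T : measurableType d) (R : realType)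
    (mu : {measure set T -> \bar R}) (D : set T) (f g : T -> \bar R) (k : R) :
  measurable D -> 0 < k -> measurable_fun D f -> measurable_fun D g ->
  (forall t, D t -> k%:E * f t <= g t)%E ->
  (k%:E * \int[mu]_(t in D) f t <= \int[mu]_(t in D) g t)%E.
Proof.
move=> mD k0 mf mg fg; have k_ge0 := ltW k0.
have fg' : {in D, forall t, (k%:E * f t <= g t)%E} by move=> t /set_mem; exact: fg.
rewrite (integralE _ _ f) (integralE _ _ g).
apply: le_trans (le_muleBr _ k0 (integral_ge0 _ (fun t _ => funeneg_ge0 f t))) _.
apply: leeB.
  rewrite -ge0_integralZl_EFin //; last exact: measurable_funepos.
  apply: ge0_le_integral => //.
  - by move=> t _; rewrite mule_ge0 ?lee_fin ?funepos_ge0.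
  - exact/measurable_funeM/measurable_funepos.
  - exact: measurable_funepos.
  move=> t Dt; rewrite -[X in (X <= _)%E](congr1 (fun h => h t) (ge0_funeposM f k_ge0)).
  by apply: funepos_le fg' _ _; rewrite inE.
rewrite -ge0_integralZl_EFin //; last exact: measurable_funeneg.
apply: ge0_le_integral => //.
- exact: measurable_funeneg.
- exact/measurable_funeM/measurable_funeneg.
move=> t Dt; rewrite -[X in (_ <= X)%E](congr1 (fun h => h t) (ge0_funenegM f k_ge0)).
by apply: funeneg_le fg' _ _; rewrite inE.
Qed.

Theorem proposition1 (R : realType) (V : nat) (K : R) (hK : 0 <= K)
    (d : measure_display) (Omega : measurableType d)
    (P : probability Omega R) (X : Type)
    (xs : Omega -> 'I_V -> X) (Cs : Omega -> 'I_V -> seq (constraint R V))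
    (hC : forall w t c, c \in Cs w t -> constraint_nonneg c)
    (L : set (X -> 'I_2))
    (hmeasRad : measurable_fun setT (fun w => Rad (LK L K (xs w) (Cs w)) (xs w) : \bar R)) :
  exists B : strategy R V X, valid_strategy B /\
    forall A : strategy R V X, valid_strategy A ->
      measurable_fun setT (fun w => cond_exp_regret L K A B (xs w) (Cs w) : \bar R) ->
      ((1/2)%:E * \int[P]_w Rad (LK L K (xs w) (Cs w)) (xs w)
        <= \int[P]_w cond_exp_regret L K A B (xs w) (Cs w))%E.
Proof.
exists uniform_labeler; split; first exact: uniform_labeler_valid.
move=> A hA mregret; apply: scale_le_integral => // w _.
exact: half_Rad_le_cond_exp_regret.
Qed.
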